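(* Let $K$ be an alphabet space and $\sigma:K\to K^+$ a primitive generalized substitution. Then for every $a\in K$, $\lim_{n\to\infty}|\sigma^n(a)|=\infty$.
   Context: An alphabet space is a compact zero-dimensional metric space $K$ with at least two points; $K^+$ is the set of nonempty finite words over $K$. A generalized substitution is a map $\sigma:K\to K^+$ with $a\mapsto|\sigma(a)|$ continuous and, for each $j$, $a\mapsto$ ($j$-th letter of $\sigma(a)$) continuous on $\{a:|\sigma(a)|\ge j\}$; it is extended to words by concatenation and iterated. $\sigma$ is primitive if for every nonempty open $V\subset K$ there is $j$ such that for all $a\in K$ and all $k\ge j$ some letter of $\sigma^k(a)$ lies in $V$. *)

From HB Require Import structures.
From mathcomp Require Import all_boot all_order all_algebra.
From mathcomp Require Import all_classical all_reals all_analysis.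
Set Implicit Arguments. Unset Strict Implicit. Unset Printing Implicit Defensive.
Import Order.TTheory GRing.Theory Num.Theory.
Local Open Scope classical_set_scope.

Definition subst_word {K : Type} (sigma : K -> seq K) (w : seq K) : seq K :=
  flatten (map sigma w).

Definition subst_iter {K : Type} (sigma : K -> seq K) (k : nat) (a : K) : seq K :=
  iter k (subst_word sigma) [:: a].

(* Generalized substitution: sigma(a) is a nonempty word, a |-> |sigma a| is
   continuous (nat carries its discrete topology), and for each j the j-th
   letter (0-indexed here) is continuous on {a | |sigma a| > j}. *)
Definition generalized_substitution {K : topologicalType} (sigma : K -> seq K) : Prop :=
  [/\ forall a, (0 < size (sigma a))%N,
      continuous (fun a => size (sigma a)) &
      forall j : nat,
        {within [set a | (j < size (sigma a))%N],
           continuous (fun a => nth a (sigma a) j)}].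

Definition primitive_subst {K : topologicalType} (sigma : K -> seq K) : Prop :=
  forall V : set K, open V -> V !=set0 ->
    exists j : nat, forall (a : K) (k : nat), (j <= k)%N ->
      exists2 x, x \in subst_iter sigma k a & V x.

From HB Require Import structures.
From mathcomp Require Import all_boot all_order all_algebra.
From mathcomp Require Import all_classical all_reals all_analysis.
From mathcomp Require Import zify.
Set Implicit Arguments.
Unset Strict Implicit.
Unset Printing Implicit Defensive.
Local Open Scope classical_set_scope.

(* Since no letter is erased, |sigma^n(a)| never decreases, and it grows by
   at least one whenever sigma^n(a) contains a letter b with |sigma(b)| > 1.
   If such a letter exists, |sigma| is locally constant around it, so it has an
   open neighbourhood of long letters; primitivity makes every sigma^n(a) with
   n >= j meet that neighbourhood, whence |sigma^n(a)| >= n - j.  If no such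
   letter exists, every sigma^n(a) is a single letter, which cannot visit two
   disjoint open sets at the same time, contradicting primitivity. *)

Lemma subst_iterS (K : Type) (sigma : K -> seq K) n a :
  subst_iter sigma n.+1 a = subst_word sigma (subst_iter sigma n a).
Proof. by rewrite /subst_iter iterS. Qed.

Lemma subst_word_cat (K : Type) (sigma : K -> seq K) w1 w2 :
  subst_word sigma (w1 ++ w2) = subst_word sigma w1 ++ subst_word sigma w2.
Proof. by rewrite /subst_word map_cat flatten_cat. Qed.

Lemma subst_word1 (K : Type) (sigma : K -> seq K) x :
  subst_word sigma [:: x] = sigma x.
Proof. exact: cats0. Qed.

Section NonErasing.

Variables (K : eqType) (sigma : K -> seq K).
Hypothesis size_sigma_gt0 : forall x, (0 < size (sigma x))%N.

Lemma leq_size_subst_word w : (size w <= size (subst_word sigma w))%N.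
Proof.
elim: w => // x w IH.
rewrite -cat1s subst_word_cat subst_word1 !size_cat /=.
by have := size_sigma_gt0 x; lia.
Qed.

Lemma ltn_size_subst_word w x :
  x \in w -> (1 < size (sigma x))%N -> (size w < size (subst_word sigma w))%N.
Proof.
case/splitPr=> w1 w2 long_x.
rewrite -cat1s !subst_word_cat subst_word1 !size_cat /=.
have := leq_size_subst_word w1; have := leq_size_subst_word w2; lia.
Qed.

Lemma size_subst_iter_ge (B : set K) (a : K) (j : nat) :
  (forall x, B x -> (1 < size (sigma x))%N) ->
  (forall k, (j <= k)%N -> exists2 x, x \in subst_iter sigma k a & B x) ->
  forall n, (n - j <= size (subst_iter sigma n a))%N.
Proof.
move=> long_B meets_B; elim=> [|n IH]; first by rewrite sub0n.
case: (leqP j n) => [le_jn | lt_nj]; last by have -> : (n.+1 - j = 0)%N by lia.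
have [x x_in Bx] := meets_B n le_jn.
have := ltn_size_subst_word x_in (long_B x Bx).
by rewrite -subst_iterS; lia.
Qed.

End NonErasing.

Lemma size_subst_iter_unit (K : Type) (sigma : K -> seq K) :
  (forall x, size (sigma x) = 1%N) ->
  forall n a, exists z, subst_iter sigma n a = [:: z].
Proof.
move=> unit_sigma; elim=> [|n IH] a; first by exists a.
rewrite subst_iterS; have [z ->] := IH a; rewrite subst_word1.
by move: (unit_sigma z); case: (sigma z) => [|y []] // _; exists y.
Qed.

Lemma unit_length_not_primitive (K : topologicalType) (sigma : K -> seq K) :
  hausdorff_space K -> (exists x y : K, x <> y) ->
  (forall x, size (sigma x) = 1%N) -> ~ primitive_subst sigma.
Proof.
move=> K_hausdorff [x [y /eqP neq_xy]] unit_sigma prim.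
move: K_hausdorff; rewrite open_hausdorff => /(_ x y neq_xy).
move=> [[A B]] /= [xA yB] [oA oB /eqP disjAB].
rewrite !in_setE in xA yB.
have [jA visitA] := prim A oA (ex_intro _ x xA).
have [jB visitB] := prim B oB (ex_intro _ y yB).
have [u u_in Au] := visitA x (maxn jA jB) (leq_maxl _ _).
have [v v_in Bv] := visitB x (maxn jA jB) (leq_maxr _ _).
have [z Ez] := size_subst_iter_unit unit_sigma (maxn jA jB) x.
rewrite Ez !mem_seq1 in u_in v_in.
move/eqP: u_in Au => ->; move/eqP: v_in Bv => -> Bz Az.
by have : (A `&` B) z by []; rewrite disjAB.
Qed.

Lemma open_nbhs_size_eq (K : topologicalType) (sigma : K -> seq K) (b : K) :
  continuous (fun x => size (sigma x)) ->
  exists2 B : set K, open B /\ B b & forall x, B x -> size (sigma x) = size (sigma b).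
Proof.
move=> size_cont.
have : nbhs b [set x | size (sigma x) = size (sigma b)].
  have nbhs_size : nbhs (size (sigma b)) [set size (sigma b)] by [].
  exact: (size_cont b _ nbhs_size).
by rewrite nbhsE => -[B [oB Bb] sub_B]; exists B.
Qed.

Theorem mainTheorem17 (R : realType) (K : pseudoMetricType R)
  (K_hausdorff : hausdorff_space K)
  (K_compact : compact [set: K])
  (K_zerodim : zero_dimensional K)
  (K_two : exists x y : K, x <> y)
  (sigma : K -> seq K)
  (Hsub : generalized_substitution sigma)
  (Hprim : primitive_subst sigma) :
  forall a : K, forall M : nat, exists N : nat, forall n : nat, (N <= n)%N ->
    (M <= size (subst_iter sigma n a))%N.
Proof.
move=> a M; case: Hsub => size_gt0 size_cont _.
have [[b long_b] | no_long] := pselect (exists b, (1 < size (sigma b))%N).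
  have [B [oB Bb] size_B] := open_nbhs_size_eq b size_cont.
  have [j meets_B] := Hprim B oB (ex_intro _ b Bb).
  have long_B x : B x -> (1 < size (sigma x))%N by move/size_B ->.
  exists (j + M) => n le_n.
  have grow : (n - j <= size (subst_iter sigma n a))%N.
    exact: (size_subst_iter_ge (sigma := sigma) size_gt0 long_B (meets_B a)).
  lia.
exfalso; apply: (unit_length_not_primitive K_hausdorff K_two _ Hprim) => x.
have := size_gt0 x; case: (ltngtP 1 (size (sigma x))) => // long_x.
by case: no_long; exists x.
Qed.
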